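(* Let $n\ge1$ and $\gamma=1$ (so $\beta=2$). There exist no $\ell,R>0$ and $U:[0,R]\to[0,\infty)$, continuous on $[0,R]$ and $C^2$ on $[0,R)$, such that $$U''+\Big(\frac{n-1}{r}-\frac r2\Big)U'+U=1\ \text{ in }(0,R),\quad U(0)=\ell,\ U'(0)=0,\quad U(R)=0,\ (U^{1/2})'(R)=-\frac{\sqrt2}{2}.$$
   Context: $(U^{1/2})'(R)$ is the left derivative at $R$, i.e. $\lim_{r\uparrow R}U^{1/2}(r)/(r-R)$. *)

From Stdlib Require Import Reals.
From Coquelicot Require Import Coquelicot.
Open Scope R_scope.

Definition is_right_derive (f : R -> R) (x l : R) : Prop :=
  filterlim (fun h => (f (x + h) - f x) / h) (at_right 0) (locally l).

Definition C2_on_0R (U U1 U2 : R -> R) (Rr : R) : Prop :=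
  (forall r, 0 < r < Rr -> is_derive U r (U1 r) /\ is_derive U1 r (U2 r)) /\
  is_right_derive U 0 (U1 0) /\ is_right_derive U1 0 (U2 0) /\
  (forall r, 0 <= r < Rr ->
     filterlim U2 (within (fun x => 0 <= x < Rr) (locally r)) (locally (U2 r))).

Definition cont_on_0R (U : R -> R) (Rr : R) : Prop :=
  forall r, 0 <= r <= Rr ->
    filterlim U (within (fun x => 0 <= x <= Rr) (locally r)) (locally (U r)).

From Stdlib Require Import Reals Lra.
From Coquelicot Require Import Coquelicot.
Open Scope R_scope.

(* [U - 1] and [phi r = r ^ 2 - 2 N] both solve the homogeneous equation
   [V'' + ((N - 1) / r - r / 2) V' + V = 0], so by Abel's identity
   [r ^ (N - 1) exp (- r ^ 2 / 4)] times their Wronskian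
   [W = (U - 1) phi' - phi U'] is constant on (0, R).  As r -> 0+, W -> 0
   because [U'(0) = phi'(0) = 0], while the weight stays bounded since N >= 1;
   hence W = 0 on (0, R).  The boundary condition at R forces
   [U r <= C (R - r) ^ 2], so by the mean value theorem there are points near R
   where U and U' are both small, and there [W ~ -2 R < 0]. *)

Lemma ball_Rabs (x e y : R) : ball x e y -> Rabs (y - x) < e.
Proof. exact (fun H => H). Qed.

Lemma Rabs_ball (x e y : R) : Rabs (y - x) < e -> ball x e y.
Proof. exact (fun H => H). Qed.

Lemma at_right_interval (a : R) (P : R -> Prop) :
  at_right a P <-> exists d, 0 < d /\ forall y, a < y < a + d -> P y.
Proof.
split.
- intros [d Hd]. exists d. split; [apply cond_pos|].
  intros y Hy. apply Hd; [apply Rabs_ball; rewrite Rabs_pos_eq|]; lra.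
- intros [d [Hd0 Hd]]. exists (mkposreal d Hd0). intros y Hy Hay.
  apply ball_Rabs, Rabs_lt_between in Hy. simpl in Hy. apply Hd. lra.
Qed.

Lemma at_left_interval (b : R) (P : R -> Prop) :
  at_left b P <-> exists d, 0 < d /\ forall y, b - d < y < b -> P y.
Proof.
split.
- intros [d Hd]. exists d. split; [apply cond_pos|].
  intros y Hy. apply Hd; [apply Rabs_ball; rewrite Rabs_left|]; lra.
- intros [d [Hd0 Hd]]. exists (mkposreal d Hd0). intros y Hy Hyb.
  apply ball_Rabs, Rabs_lt_between in Hy. simpl in Hy. apply Hd. lra.
Qed.

Section Limits.

Context {T : Type} {F : (T -> Prop) -> Prop} {FF : Filter F}.

Lemma filterlim_Rmult_fun (f g : T -> R) (a b : R) :
  filterlim f F (locally a) -> filterlim g F (locally b) ->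
  filterlim (fun t => f t * g t) F (locally (a * b)).
Proof. intros Hf Hg. exact (filterlim_comp_2 _ _ _ Hf Hg (filterlim_mult a b)). Qed.

Lemma filterlim_Rminus_fun (f g : T -> R) (a b : R) :
  filterlim f F (locally a) -> filterlim g F (locally b) ->
  filterlim (fun t => f t - g t) F (locally (a - b)).
Proof.
intros Hf Hg.
apply (filterlim_comp_2 _ _ _ Hf (filterlim_comp _ _ _ g opp _ _ _ Hg (filterlim_opp b))
         (filterlim_plus a (- b))).
Qed.

Lemma filterlim_bounded_mult_0 (f g : T -> R) (M : R) :
  F (fun t => Rabs (f t) <= M) -> filterlim g F (locally 0) ->
  filterlim (fun t => f t * g t) F (locally 0).
Proof.
intros HM Hg. apply filterlim_locally. intros eps.
assert (HM1 : 0 < Rabs M + 1) by (pose proof (Rabs_pos M); lra).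
assert (Heps : 0 < eps / (Rabs M + 1)) by (apply Rdiv_lt_0_compat; [apply cond_pos | lra]).
pose proof (proj1 (filterlim_locally _ _) Hg (mkposreal _ Heps)) as Hsmall.
generalize (filter_and _ _ HM Hsmall). apply filter_imp.
intros t [Hft Hgt]. apply ball_Rabs in Hgt. apply Rabs_ball. simpl in *.
rewrite Rminus_0_r in *. rewrite Rabs_mult.
pose proof (Rle_abs M). pose proof (Rabs_pos (g t)). pose proof (Rabs_pos (f t)).
apply Rle_lt_trans with (Rabs (g t) * (Rabs M + 1)); [nra|].
apply Rlt_div_r; lra.
Qed.

End Limits.

Lemma continuous_at_right (f : R -> R) (x : R) :
  continuous f x -> filterlim f (at_right x) (locally (f x)).
Proof. intros Hf. exact (filterlim_filter_le_1 _ (filter_le_within _) Hf). Qed.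

Lemma right_derive_at_right (f : R -> R) (x l : R) :
  is_right_derive f x l -> filterlim f (at_right x) (locally (f x)).
Proof.
intros Hf. apply filterlim_locally. intros eps.
pose proof (proj1 (filterlim_locally _ _) Hf (mkposreal 1 Rlt_0_1)) as Hq.
apply at_right_interval in Hq as [d [Hd Hq]].
assert (Hl : 0 < Rabs l + 1) by (pose proof (Rabs_pos l); lra).
apply at_right_interval.
exists (Rmin d (eps / (Rabs l + 1))). split.
{ apply Rmin_glb_lt; [lra | apply Rdiv_lt_0_compat; [apply cond_pos | lra]]. }
intros y Hy.
pose proof (Rmin_l d (eps / (Rabs l + 1))). pose proof (Rmin_r d (eps / (Rabs l + 1))).
specialize (Hq (y - x) ltac:(lra)). apply ball_Rabs in Hq. simpl in Hq.
replace (x + (y - x)) with y in Hq by ring.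
set (q := (f y - f x) / (y - x)) in Hq.
assert (Hfy : f y - f x = q * (y - x)) by (unfold q; field; lra).
assert (Hqb : Rabs q < Rabs l + 1) by (pose proof (Rabs_triang_inv q l); lra).
apply Rabs_ball. rewrite Hfy, Rabs_mult, (Rabs_pos_eq (y - x)) by lra.
apply Rle_lt_trans with ((Rabs l + 1) * (y - x)); [pose proof (Rabs_pos q); nra|].
rewrite Rmult_comm. apply Rlt_div_r; lra.
Qed.

Definition radial_weight (N r : R) : R := exp ((N - 1) * ln r - r ^ 2 / 4).

Definition radial_wronskian (N : R) (U U1 : R -> R) (r : R) : R :=
  (U r - 1) * (2 * r) - (r ^ 2 - 2 * N) * U1 r.

Lemma radial_wronskian_first_integral (N : R) (U U1 U2 : R -> R) (r : R) :
  0 < r -> is_derive U r (U1 r) -> is_derive U1 r (U2 r) ->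
  U2 r + ((N - 1) / r - r / 2) * U1 r + U r = 1 ->
  is_derive (fun t => radial_weight N t * radial_wronskian N U U1 t) r 0.
Proof.
intros Hr HU HU1 Hode.
unfold radial_weight, radial_wronskian.
auto_derive.
- repeat split; [lra | exists (U1 r) | exists (U2 r)]; assumption.
- replace (Derive (fun x => U x) r) with (U1 r)
    by (symmetry; exact (is_derive_unique _ _ _ HU)).
  replace (Derive (fun x => U1 x) r) with (U2 r)
    by (symmetry; exact (is_derive_unique _ _ _ HU1)).
  replace (U2 r) with (1 - U r - ((N - 1) / r - r / 2) * U1 r) by lra.
  field. lra.
Qed.

Lemma radial_weight_bounds (N r : R) : 1 <= N -> 0 < r < 1 -> 0 < radial_weight N r < 1.
Proof.
intros HN Hr. split; [apply exp_pos|].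
rewrite <- exp_0. apply exp_increasing.
assert (ln r < 0) by (rewrite <- ln_1; apply ln_increasing; lra).
nra.
Qed.

Lemma is_derive_0_constant (f : R -> R) (a b : R) :
  (forall x, a < x < b -> is_derive f x 0) ->
  forall x y, a < x < b -> a < y < b -> f x = f y.
Proof.
intros Hf x y Hx Hy.
assert (Hmin : a < Rmin x y) by (apply Rmin_glb_lt; lra).
assert (Hmax : Rmax x y < b) by (apply Rmax_lub_lt; lra).
destruct (MVT_gen f x y (fun _ => 0)) as [c [_ Hc]].
- intros t Ht. apply Hf. lra.
- intros t Ht. apply continuity_pt_filterlim, (ex_derive_continuous (V := R_NormedModule)).
  exists 0. apply Hf. lra.
- lra.
Qed.

Lemma radial_wronskian_at_right_0 (N : R) (U U1 : R -> R) (u0 : R) :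
  filterlim U (at_right 0) (locally u0) -> filterlim U1 (at_right 0) (locally 0) ->
  filterlim (radial_wronskian N U U1) (at_right 0) (locally 0).
Proof.
intros HU HU1.
assert (Hlin : filterlim (fun r => 2 * r) (at_right 0) (locally (2 * 0))).
{ apply (continuous_at_right (fun r => 2 * r)), (ex_derive_continuous (V := R_NormedModule)).
  auto_derive. exact I. }
assert (Hphi : filterlim (fun r => r ^ 2 - 2 * N) (at_right 0) (locally (0 ^ 2 - 2 * N))).
{ apply (continuous_at_right (fun r => r ^ 2 - 2 * N)),
    (ex_derive_continuous (V := R_NormedModule)).
  auto_derive. exact I. }
replace 0 with ((u0 - 1) * (2 * 0) - (0 ^ 2 - 2 * N) * 0) at 2 by ring.
apply filterlim_Rminus_fun; apply filterlim_Rmult_fun; try assumption.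
apply filterlim_Rminus_fun; [exact HU | apply filterlim_const].
Qed.

Lemma cont_on_0R_at_right_0 (U : R -> R) (Rr : R) :
  0 < Rr -> cont_on_0R U Rr -> filterlim U (at_right 0) (locally (U 0)).
Proof.
intros HR HU. specialize (HU 0 ltac:(lra)).
apply (filterlim_filter_le_1 (F := within (fun x => 0 <= x <= Rr) (locally 0))); [|exact HU].
intros P [d Hd]. apply at_right_interval.
exists (Rmin d Rr). split; [apply Rmin_glb_lt; [apply cond_pos | lra]|].
intros y Hy. pose proof (Rmin_l d Rr). pose proof (Rmin_r d Rr).
apply Hd; [apply Rabs_ball; rewrite Rabs_pos_eq|]; lra.
Qed.

Lemma radial_wronskian_vanishes (N Rr u0 : R) (U U1 U2 : R -> R) :
  1 <= N ->
  (forall r, 0 < r < Rr -> is_derive U r (U1 r) /\ is_derive U1 r (U2 r)) ->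
  (forall r, 0 < r < Rr -> U2 r + ((N - 1) / r - r / 2) * U1 r + U r = 1) ->
  filterlim U (at_right 0) (locally u0) -> filterlim U1 (at_right 0) (locally 0) ->
  forall r, 0 < r < Rr -> radial_wronskian N U U1 r = 0.
Proof.
intros HN Hd Hode HU HU1 r Hr.
set (g := fun t => radial_weight N t * radial_wronskian N U U1 t).
assert (Hconst : forall s, 0 < s < Rr -> g s = g r).
{ intros s Hs. apply (is_derive_0_constant g 0 Rr); try assumption.
  intros t Ht. destruct (Hd t Ht).
  apply (radial_wronskian_first_integral N U U1 U2); auto; lra. }
assert (Hg0 : filterlim g (at_right 0) (locally 0)).
{ apply (filterlim_bounded_mult_0 _ _ 1).
  - apply at_right_interval. exists 1. split; [lra|]. intros t Ht.
    pose proof (radial_weight_bounds N t HN ltac:(lra)). rewrite Rabs_pos_eq; lra.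
  - exact (radial_wronskian_at_right_0 N U U1 u0 HU HU1). }
assert (Hgr : filterlim g (at_right 0) (locally (g r))).
{ apply (filterlim_ext_loc (fun _ => g r)); [|apply filterlim_const].
  apply at_right_interval. exists Rr. split; [lra|].
  intros s Hs. symmetry. apply Hconst. lra. }
pose proof (filterlim_locally_unique _ _ _ Hgr Hg0) as Hgr0.
apply Rmult_integral in Hgr0 as [Hw | Hw]; [|exact Hw].
pose proof (exp_pos ((N - 1) * ln r - r ^ 2 / 4)). unfold radial_weight in Hw. lra.
Qed.

Lemma sqrt_quotient_at_left_bound (U : R -> R) (b L : R) :
  at_left b (fun r => 0 <= U r) ->
  filterlim (fun r => sqrt (U r) / (r - b)) (at_left b) (locally L) ->
  at_left b (fun r => 0 <= U r <= (Rabs L + 1) ^ 2 * (b - r) ^ 2).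
Proof.
intros Hpos Hlim.
pose proof (proj1 (filterlim_locally _ _) Hlim (mkposreal 1 Rlt_0_1)) as Hq.
assert (Hlt : at_left b (fun r => r < b)).
{ apply at_left_interval. exists 1. split; [lra | intros; lra]. }
generalize (filter_and _ _ Hlt (filter_and _ _ Hpos Hq)). apply filter_imp.
intros r [Hr [HUr Hqr]]. apply ball_Rabs in Hqr. simpl in Hqr.
set (q := sqrt (U r) / (r - b)) in Hqr.
assert (Hs : sqrt (U r) = - q * (b - r)) by (unfold q; field; lra).
assert (Hqb : Rabs q < Rabs L + 1) by (pose proof (Rabs_triang_inv q L); lra).
split; [exact HUr|].
rewrite <- (sqrt_sqrt (U r) HUr), Hs.
replace (- q * (b - r) * (- q * (b - r))) with (Rabs q ^ 2 * (b - r) ^ 2)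
  by (rewrite pow2_abs; ring).
pose proof (Rabs_pos q). pose proof (pow2_ge_0 (b - r)).
assert (Rabs q ^ 2 <= (Rabs L + 1) ^ 2) by nra.
nra.
Qed.

Lemma small_value_and_slope_at_left (U U1 : R -> R) (b K : R) :
  0 <= K ->
  at_left b (fun r => is_derive U r (U1 r) /\ 0 <= U r <= K * (b - r) ^ 2) ->
  forall eps, 0 < eps -> exists r, b - eps < r < b /\ U r <= eps /\ Rabs (U1 r) <= eps.
Proof.
intros HK Hnear eps Heps.
apply at_left_interval in Hnear as [d0 [Hd0 Hnear]].
assert (HepsK : 0 < eps / (2 * K + 1)) by (apply Rdiv_lt_0_compat; lra).
pose proof (Rmin_l (Rmin d0 eps) (Rmin 1 (eps / (2 * K + 1)))).
pose proof (Rmin_r (Rmin d0 eps) (Rmin 1 (eps / (2 * K + 1)))).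
pose proof (Rmin_l d0 eps). pose proof (Rmin_r d0 eps).
pose proof (Rmin_l 1 (eps / (2 * K + 1))). pose proof (Rmin_r 1 (eps / (2 * K + 1))).
set (d := Rmin (Rmin d0 eps) (Rmin 1 (eps / (2 * K + 1))) / 2).
assert (Hd : 0 < d) by (apply Rdiv_lt_0_compat; [repeat apply Rmin_glb_lt |]; lra).
assert (Hdd0 : d < d0) by (unfold d; lra).
assert (Hdeps : d < eps) by (unfold d; lra).
assert (Hd1 : d <= 1) by (unfold d; lra).
assert (HdK : d * (2 * K + 1) <= eps) by (apply Rle_div_r; unfold d; lra).
destruct (MVT_gen U (b - d) (b - d / 2) U1) as [c [Hc HMVT]].
- intros x Hx. rewrite Rmin_left, Rmax_right in Hx by lra. apply Hnear. lra.
- intros x Hx. rewrite Rmin_left, Rmax_right in Hx by lra.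
  apply continuity_pt_filterlim, (ex_derive_continuous (V := R_NormedModule)).
  exists (U1 x). apply Hnear. lra.
- rewrite Rmin_left, Rmax_right in Hc by lra.
  destruct (Hnear (b - d) ltac:(lra)) as [_ Hleft].
  destruct (Hnear (b - d / 2) ltac:(lra)) as [_ Hright].
  destruct (Hnear c ltac:(lra)) as [_ Hmid].
  assert (Hd2 : (b - c) ^ 2 <= d ^ 2) by (apply pow_incr; lra).
  exists c. split; [lra | split].
  + nra.
  + assert (Hslope : Rabs (U1 c) * (d / 2) <= K * d ^ 2).
    { rewrite <- (Rabs_pos_eq (d / 2)), <- Rabs_mult by lra.
      replace (b - d / 2 - (b - d)) with (d / 2) in HMVT by field.
      rewrite <- HMVT. apply Rabs_le.
      replace (b - (b - d)) with d in Hleft by ring.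
      replace (b - (b - d / 2)) with (d / 2) in Hright by field.
      nra. }
    nra.
Qed.

Lemma radial_wronskian_neg_at_left (N b : R) (U U1 : R -> R) :
  0 <= N -> 0 < b ->
  (forall eps, 0 < eps -> exists r, b - eps < r < b /\ U r <= eps /\ Rabs (U1 r) <= eps) ->
  exists r, 0 < r < b /\ radial_wronskian N U U1 r < 0.
Proof.
intros HN Hb Hsmall.
assert (Hc : 0 < 2 * (b ^ 2 + 2 * N)) by nra.
assert (Hbc : 0 < b / (2 * (b ^ 2 + 2 * N))) by (apply Rdiv_lt_0_compat; lra).
pose proof (Rmin_l (Rmin (1 / 2) (b / 2)) (b / (2 * (b ^ 2 + 2 * N)))).
pose proof (Rmin_r (Rmin (1 / 2) (b / 2)) (b / (2 * (b ^ 2 + 2 * N)))).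
pose proof (Rmin_l (1 / 2) (b / 2)). pose proof (Rmin_r (1 / 2) (b / 2)).
set (eps := Rmin (Rmin (1 / 2) (b / 2)) (b / (2 * (b ^ 2 + 2 * N)))) in *.
assert (Heps : 0 < eps) by (repeat apply Rmin_glb_lt; lra).
assert (Hepsb : eps * (2 * (b ^ 2 + 2 * N)) <= b) by (apply Rle_div_r; lra).
destruct (Hsmall eps Heps) as [r [Hr [HU HU1]]].
exists r. split; [lra|].
assert (Hphi : Rabs (r ^ 2 - 2 * N) <= b ^ 2 + 2 * N) by (apply Rabs_le; nra).
pose proof (Rle_abs (- ((r ^ 2 - 2 * N) * U1 r))) as Habs.
rewrite Rabs_Ropp, Rabs_mult in Habs.
pose proof (Rabs_pos (U1 r)). pose proof (Rabs_pos (r ^ 2 - 2 * N)).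
unfold radial_wronskian. nra.
Qed.

Theorem lemma6p9 (n : nat) (hn : (1 <= n)%nat) :
  ~ exists (l Rr : R) (U U1 U2 : R -> R),
      0 < l /\ 0 < Rr /\
      (forall r, 0 <= r <= Rr -> 0 <= U r) /\
      cont_on_0R U Rr /\
      C2_on_0R U U1 U2 Rr /\
      (forall r, 0 < r < Rr ->
         U2 r + ((INR n - 1) / r - r / 2) * U1 r + U r = 1) /\
      U 0 = l /\ U1 0 = 0 /\
      U Rr = 0 /\
      filterlim (fun r => sqrt (U r) / (r - Rr)) (at_left Rr)
                (locally (- sqrt 2 / 2)).
Proof.
intros [l [Rr [U [U1 [U2 [_ [HR [Hpos [Hcont [[Hd [_ [HU1 _]]] [Hode [_ [HU10 [_ Hlim]]]]]]]]]]]]]].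
assert (HN : 1 <= INR n) by exact (le_INR 1 n hn).
assert (Hwr : forall r, 0 < r < Rr -> radial_wronskian (INR n) U U1 r = 0).
{ apply (radial_wronskian_vanishes (INR n) Rr (U 0) U U1 U2); try assumption.
  - exact (cont_on_0R_at_right_0 U Rr HR Hcont).
  - pose proof (right_derive_at_right U1 0 _ HU1) as HU1lim.
    rewrite HU10 in HU1lim. exact HU1lim. }
set (K := (Rabs (- sqrt 2 / 2) + 1) ^ 2).
assert (Hnear : at_left Rr (fun r => is_derive U r (U1 r) /\ 0 <= U r <= K * (Rr - r) ^ 2)).
{ apply filter_and.
  - apply at_left_interval. exists Rr. split; [lra|]. intros r Hr. apply (Hd r). lra.
  - apply sqrt_quotient_at_left_bound; [|exact Hlim].
    apply at_left_interval. exists Rr. split; [lra|]. intros r Hr. apply Hpos. lra. }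
destruct (radial_wronskian_neg_at_left (INR n) Rr U U1) as [r [Hr Hneg]]; [lra | lra | |].
- exact (small_value_and_slope_at_left U U1 Rr K (pow2_ge_0 _) Hnear).
- rewrite (Hwr r Hr) in Hneg. lra.
Qed.
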